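(* Let $\Lambda$ be a row-finite $k$-graph with no sources and $R$ a commutative ring with $1$. Let $a$ be a nonzero element of the center $Z(\mathrm{KP}_R(\Lambda))$, written in normal form $a=\sum_{(\alpha,\beta)\in F}r_{\alpha,\beta}s_\alpha s_{\beta^*}$. Then: (1) for every $(\sigma,\tau)\in F$, $r(\sigma)=r(\tau)$; (2) setting $W=\{v\in\Lambda^0:\ v=r(\beta)\text{ for some }(\alpha,\beta)\in F\}$, if $\mu\in\Lambda$ satisfies $s(\mu)\in W$ then $r(\mu)\in W$; (3) for every $(\sigma,\tau)\in F$ there is $(\alpha,\beta)\in F$ with $r(\alpha)=r(\beta)=s(\sigma)=s(\tau)$; (4) there exist $l\in\mathbb{N}\setminus\{0\}$ and $(\alpha_1,\beta_1),\dots,(\alpha_l,\beta_l)\in F$ such that the composite $\beta_1\cdots\beta_l$ is defined and is a closed path, i.e. $r(\beta_1\cdots\beta_l)=s(\beta_1\cdots\beta_l)$.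
   Context: A $k$-graph is a countable category $\Lambda$ with a functor $d:\Lambda\to\mathbb{N}^k$ ($\mathbb{N}^k$ a one-object category under addition) with unique factorization: whenever $d(\lambda)=m+n$ there are unique $\mu,\nu$ with $d(\mu)=m,d(\nu)=n,\lambda=\mu\nu$. $\Lambda^0$ = vertices (degree-$0$ morphisms), $\Lambda^n=d^{-1}(n)$, $r,s$ range and source, $\lambda\mu$ defined when $s(\lambda)=r(\mu)$, $v\Lambda^n=\{\lambda\in\Lambda^n:r(\lambda)=v\}$. Row-finite: $v\Lambda^n$ finite; no sources: $v\Lambda^n\ne\emptyset$. Kumjian-Pask $\Lambda$-family in an $R$-algebra $A$: $P:\Lambda^0\to A$, $S:\Lambda^{\ne0}\cup\{\lambda^*:\lambda\in\Lambda^{\neq0}\}\to A$ with (KP1) $P_v$ mutually orthogonal idempotents; (KP2) for $r(\mu)=s(\lambda)$: $S_\lambda S_\mu=S_{\lambda\mu}$, $S_{\mu^*}S_{\lambda^*}=S_{(\lambda\mu)^*}$, $P_{r(\lambda)}S_\lambda=S_\lambda=S_\lambda P_{s(\lambda)}$, $P_{s(\lambda)}S_{\lambda^*}=S_{\lambda^*}=S_{\lambda^*}P_{r(\lambda)}$; (KP3) $S_{\lambda^*}S_\mu=\delta_{\lambda,\mu}P_{s(\lambda)}$ when $d(\lambda)=d(\mu)$; (KP4) $P_v=\sum_{\lambda\in v\Lambda^n}S_\lambda S_{\lambda^*}$ for $n\ne0$. $\mathrm{KP}_R(\Lambda)$ is the $R$-algebra generated by a universal such family $(p,s)$; for a vertex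 $v$, $s_v=s_{v^*}=p_v$. Normal form: a nonzero $a\in\mathrm{KP}_R(\Lambda)$ is written in normal form $a=\sum_{(\alpha,\beta)\in F}r_{\alpha,\beta}s_\alpha s_{\beta^*}$ if there is $m\in\mathbb{N}^k$ with $F\subset\Lambda\times\Lambda^m$ finite, every $r_{\alpha,\beta}\in R\setminus\{0\}$, and $s(\alpha)=s(\beta)$ for all $(\alpha,\beta)\in F$. (Every nonzero element admits such a form.) *)

From HB Require Import structures.
From mathcomp Require Import all_boot all_order all_algebra.
Set Implicit Arguments. Unset Strict Implicit. Unset Printing Implicit Defensive.
Import GRing.Theory.
Local Open Scope ring_scope.

Definition deg (k : nat) := {ffun 'I_k -> nat}.
Definition deg0 (k : nat) : deg k := [ffun _ => 0%N].
Definition degD (k : nat) (m n : deg k) : deg k := [ffun i => (m i + n i)%N].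

(* k-graphs.  A (small) category is described by its set of morphisms        *)
(* [kmor]; objects are identified with identity morphisms.  [kr]/[ks] give   *)
(* the identity morphisms at the range/source, [kcomp l m] is the composite  *)
(* "l m" (only meaningful when ks l = kr m), [kd] is the degree functor.     *)
Record kgraph (k : nat) := KGraph {
  kmor : countType;
  kr : kmor -> kmor;
  ks : kmor -> kmor;
  kcomp : kmor -> kmor -> kmor;
  kd : kmor -> deg k;
  kr_r : forall l, kr (kr l) = kr l;
  ks_r : forall l, ks (kr l) = kr l;
  kr_s : forall l, kr (ks l) = ks l;
  ks_s : forall l, ks (ks l) = ks l;
  kcomp_id_l : forall l, kcomp (kr l) l = l;
  kcomp_id_r : forall l, kcomp l (ks l) = l;
  kr_comp : forall l m, ks l = kr m -> kr (kcomp l m) = kr l;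
  ks_comp : forall l m, ks l = kr m -> ks (kcomp l m) = ks m;
  kcompA : forall l m n, ks l = kr m -> ks m = kr n ->
    kcomp l (kcomp m n) = kcomp (kcomp l m) n;
  kd_id : forall l, kd (kr l) = deg0 k;
  kd_comp : forall l m, ks l = kr m -> kd (kcomp l m) = degD (kd l) (kd m);
  kfact : forall l (m n : deg k), kd l = degD m n ->
    exists mu nu, [/\ kd mu = m, kd nu = n, ks mu = kr nu & l = kcomp mu nu];
  kfact_uniq : forall (m n : deg k) mu nu mu' nu',
    kd mu = m -> kd nu = n -> ks mu = kr nu ->
    kd mu' = m -> kd nu' = n -> ks mu' = kr nu' ->
    kcomp mu nu = kcomp mu' nu' -> mu = mu' /\ nu = nu'
}.

Section KGraphDefs.
Variables (k : nat) (G : kgraph k).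

Definition is_vertex (v : kmor G) : bool := kd v == deg0 k.

Definition row_finite : Prop :=
  forall (v : kmor G) (n : deg k), exists s : seq (kmor G),
    forall l, (l \in s) = (kr l == v) && (kd l == n).

Definition no_sources : Prop :=
  forall (v : kmor G) (n : deg k), is_vertex v ->
    exists l, kr l = v /\ kd l = n.

(* Kumjian-Pask families in a (unital) R-algebra B.  P is used on vertices, *)
(* S and Sst (= S_{lambda^*}) on morphisms of nonzero degree.               *)
Variables (R : comNzRingType) (B : algType R).

Definition is_KP_family (P S Sst : kmor G -> B) : Prop :=
  [/\
      ((forall v, is_vertex v -> P v * P v = P v) /\
       (forall v w, is_vertex v -> is_vertex w -> v != w -> P v * P w = 0)),
      (forall l m, ~~ is_vertex l -> ~~ is_vertex m -> kr m = ks l ->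
         S l * S m = S (kcomp l m) /\ Sst m * Sst l = Sst (kcomp l m)),
      (forall l, ~~ is_vertex l ->
         [/\ P (kr l) * S l = S l, S l * P (ks l) = S l,
             P (ks l) * Sst l = Sst l & Sst l * P (kr l) = Sst l]),
      (forall l m, ~~ is_vertex l -> ~~ is_vertex m -> kd l = kd m ->
         Sst l * S m = (if l == m then P (ks l) else 0)) &
      (forall v (n : deg k), is_vertex v -> n != deg0 k ->
         forall s : seq (kmor G), uniq s ->
         (forall l, (l \in s) = (kr l == v) && (kd l == n)) ->
         P v = \sum_(l <- s) S l * Sst l)].

Definition sK (P S : kmor G -> B) (l : kmor G) : B :=
  if is_vertex l then P l else S l.
Definition sKs (P Sst : kmor G -> B) (l : kmor G) : B :=
  if is_vertex l then P l else Sst l.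

Inductive KPgen (P S Sst : kmor G -> B) : B -> Prop :=
  | KPgen_P v : is_vertex v -> KPgen P S Sst (P v)
  | KPgen_S l : ~~ is_vertex l -> KPgen P S Sst (S l)
  | KPgen_Sst l : ~~ is_vertex l -> KPgen P S Sst (Sst l)
  | KPgen_0 : KPgen P S Sst 0
  | KPgen_add x y : KPgen P S Sst x -> KPgen P S Sst y -> KPgen P S Sst (x + y)
  | KPgen_mul x y : KPgen P S Sst x -> KPgen P S Sst y -> KPgen P S Sst (x * y)
  | KPgen_scale (c : R) x : KPgen P S Sst x -> KPgen P S Sst (c *: x).

End KGraphDefs.

Definition unital_alg_hom (R : comNzRingType) (A B : algType R) (f : A -> B) : Prop :=
  [/\ forall x y, f (x + y) = f x + f y,
      forall x y, f (x * y) = f x * f y,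
      forall (c : R) x, f (c *: x) = c *: f x &
      f 1 = 1].

(* KP_R(Lambda).  Since MathComp algebras are unital while KP_R(Lambda) is   *)
(* in general not, we describe the unitization: a unital R-algebra A with a *)
(* KP family (P,S,Sst) such that                                            *)
(*  - A = R.1 + <family>  (the family generates A as a unital algebra), and *)
(*  - for every KP family in every unital R-algebra B there is a unique     *)
(*    unital R-algebra homomorphism A -> B mapping the family to it.        *)
(* Then KP_R(Lambda) is the non-unital subalgebra [KPgen P S Sst] of A.     *)
Definition is_KP_algebra (k : nat) (G : kgraph k) (R : comNzRingType) (A : algType R)
    (P S Sst : kmor G -> A) : Prop :=
  [/\ is_KP_family P S Sst,
      (forall x : A, exists (c : R) (y : A), KPgen P S Sst y /\ x = c%:A + y) &
      (forall (B : algType R) (Q T Tst : kmor G -> B), is_KP_family Q T Tst ->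
         (exists f : A -> B, unital_alg_hom f /\
            [/\ forall v, is_vertex v -> f (P v) = Q v,
                forall l, ~~ is_vertex l -> f (S l) = T l &
                forall l, ~~ is_vertex l -> f (Sst l) = Tst l]) /\
         (forall f g : A -> B, unital_alg_hom f -> unital_alg_hom g ->
            (forall v, is_vertex v -> f (P v) = g (P v)) ->
            (forall l, ~~ is_vertex l -> f (S l) = g (S l)) ->
            (forall l, ~~ is_vertex l -> f (Sst l) = g (Sst l)) ->
            forall x, f x = g x))].

Definition in_KP_center (k : nat) (G : kgraph k) (R : comNzRingType) (A : algType R)
    (P S Sst : kmor G -> A) (a : A) : Prop :=
  KPgen P S Sst a /\ (forall b, KPgen P S Sst b -> a * b = b * a).

Definition kcomp_seq (k : nat) (G : kgraph k) (b0 : kmor G) (bs : seq (kmor G)) : kmor G :=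
  foldl (@kcomp k G) b0 bs.
Definition composable_seq (k : nat) (G : kgraph k) (b0 : kmor G) (bs : seq (kmor G)) : bool :=
  path (fun x y => ks x == kr y) b0 bs.

From HB Require Import structures.
From mathcomp Require Import all_boot all_order all_algebra.
From mathcomp Require Import boolp.
Set Implicit Arguments. Unset Strict Implicit. Unset Printing Implicit Defensive.
Import GRing.Theory.

(* The terms [s_alpha s_beta^*] of a normal form are linearly independent.
   Multiplying a vanishing combination on the right by [s_beta0] leaves, by
   (KP3), [sum r_(alpha,beta0) s_alpha = 0]; and the [s_alpha] are independent
   because of the representation of [KP_R(Lambda)] on functions of pairs
   (infinite path, degree counter), where [s_alpha] applied to the indicator of
   counter [0] and evaluated at [(alpha0 y, d(alpha0))] is [delta_(alpha,alpha0)]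
   (infinite paths [y] exist since there are no sources).
   Parts (1)-(3) follow by multiplying the central element [a] on either side
   by a vertex projection, by [s_mu] or by [s_mu s_mu^*]: computing the product
   in two ways exhibits a sub-sum of the normal form that must vanish although
   it contains a term with nonzero coefficient.  By (3) every pair of [F] has a
   successor whose [beta] continues its [beta]; iterating inside the finite
   set [F] must repeat, and the [beta]s along the repetition form a closed path. *)

Lemma iter_loop (T : eqType) (s : seq T) (f : T -> T) x :
  x \in s -> {in s, forall y, f y \in s} ->
  exists i n, iter n.+1 f (iter i f x) = iter i f x.
Proof.
move=> xs fs.
have iter_s t : iter t f x \in s by elim: t => //= t; apply: fs.
have sub_s : {subset traject f x (size s).+1 <= s} by move=> _ /trajectP [t _ ->].
have : ~~ uniq (traject f x (size s).+1).
  by apply/negP => /uniq_leq_size /(_ sub_s); rewrite size_traject ltnn.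
case/(uniqPn x) => i [j [ij]]; rewrite size_traject => js.
rewrite !nth_traject ?(ltn_trans ij) // => eij.
exists i, (j - i.+1)%N.
by rewrite -iterD addSnnS subnK // eij.
Qed.

Section Degrees.
Variable k : nat.

Definition dle (p q : deg k) := [forall i, p i <= q i].
Definition degB (q p : deg k) : deg k := [ffun i => q i - p i].

Lemma degDC (p q : deg k) : degD p q = degD q p.
Proof. by apply/ffunP => i; rewrite !ffunE addnC. Qed.
Lemma degDA (p q r : deg k) : degD p (degD q r) = degD (degD p q) r.
Proof. by apply/ffunP => i; rewrite !ffunE addnA. Qed.
Lemma degD0 (p : deg k) : degD p (deg0 k) = p.
Proof. by apply/ffunP => i; rewrite !ffunE addn0. Qed.
Lemma dleDr (p q : deg k) : dle p (degD p q).
Proof. by apply/forallP => i; rewrite ffunE leq_addr. Qed.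
Lemma dleDl (p q : deg k) : dle p (degD q p).
Proof. by apply/forallP => i; rewrite ffunE leq_addl. Qed.
Lemma dle0 (p : deg k) : dle (deg0 k) p.
Proof. by apply/forallP => i; rewrite ffunE. Qed.
Lemma dle_trans (p q r : deg k) : dle p q -> dle q r -> dle p r.
Proof. by move=> /forallP pq /forallP qr; apply/forallP => i; apply: leq_trans (pq i) (qr i). Qed.
Lemma degDB (p q : deg k) : dle p q -> degD p (degB q p) = q.
Proof. by move=> /forallP pq; apply/ffunP => i; rewrite !ffunE subnKC. Qed.
Lemma degBD (p q : deg k) : degB (degD p q) p = q.
Proof. by apply/ffunP => i; rewrite !ffunE addKn. Qed.

Definition ones (N : nat) : deg k := [ffun _ => N].
Definition maxdeg (p : deg k) := (\max_i p i)%N.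

Lemma dle_ones p : dle p (ones (maxdeg p)).
Proof. by apply/forallP => i; rewrite ffunE leq_bigmax. Qed.
Lemma dle_ones2 N M : (N <= M)%N -> dle (ones N) (ones M).
Proof. by move=> NM; apply/forallP => i; rewrite !ffunE. Qed.
Lemma maxdeg_mono p q : dle p q -> (maxdeg p <= maxdeg q)%N.
Proof.
move=> /forallP pq; apply/bigmax_leqP => i _.
exact: leq_trans (pq i) (leq_bigmax _).
Qed.

End Degrees.

Section Factorization.
Variables (k : nat) (G : kgraph k).
Local Notation kmor := (kmor G).
Local Notation kr := (@kr k G).
Local Notation ks := (@ks k G).
Local Notation kd := (@kd k G).
Local Notation kcomp := (@kcomp k G).

Lemma kd_s l : kd (ks l) = deg0 k.
Proof. by rewrite -(kr_s l) kd_id. Qed.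

Lemma vertex_rs l : is_vertex l -> kr l = l /\ ks l = l.
Proof.
move=> /eqP l0.
have := @kfact_uniq _ G (deg0 k) (deg0 k) (kr l) l l (ks l) (kd_id l) l0 (ks_r l)
  l0 (kd_s l) (esym (kr_s l)).
by rewrite kcomp_id_l kcomp_id_r => /(_ erefl) [-> <-].
Qed.
Lemma vertex_r l : is_vertex l -> kr l = l. Proof. by case/vertex_rs. Qed.
Lemma vertex_s l : is_vertex l -> ks l = l. Proof. by case/vertex_rs. Qed.
Lemma is_vertex_r l : is_vertex (kr l). Proof. by rewrite /is_vertex kd_id. Qed.
Lemma is_vertex_s l : is_vertex (ks l). Proof. by rewrite /is_vertex kd_s. Qed.

(* [pre p l] and [suf p l] are the paper's [l(0, p)] and [l(p, d(l))]; they are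
   junk when [p] exceeds [kd l]. *)
Definition factor_at p (l : kmor) (mn : kmor * kmor) :=
  [/\ kd mn.1 = p, kd mn.2 = degB (kd l) p, ks mn.1 = kr mn.2 & l = kcomp mn.1 mn.2].
Definition factor p l : kmor * kmor :=
  if pselect (exists mn, factor_at p l mn) is left H then projT1 (cid H) else (l, l).
Definition pre p l := (factor p l).1.
Definition suf p l := (factor p l).2.

Lemma factorP p l : dle p (kd l) -> factor_at p l (pre p l, suf p l).
Proof.
move=> pl; rewrite /pre /suf /factor; case: pselect => [H|[]].
  by case: (cid H) => -[].
have [mu [nu [? ? ? ?]]] := kfact (esym (degDB pl)).
by exists (mu, nu).
Qed.

Section Prefix.
Variables (p : deg k) (l : kmor).
Hypothesis pl : dle p (kd l).
Lemma pre_deg : kd (pre p l) = p. Proof. by case: (factorP pl). Qed.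
Lemma suf_deg : kd (suf p l) = degB (kd l) p. Proof. by case: (factorP pl). Qed.
Lemma pre_suf : ks (pre p l) = kr (suf p l). Proof. by case: (factorP pl). Qed.
Lemma pre_sufE : kcomp (pre p l) (suf p l) = l. Proof. by case: (factorP pl). Qed.
Lemma pre_r : kr (pre p l) = kr l. Proof. by rewrite -{2}pre_sufE kr_comp // pre_suf. Qed.
Lemma suf_s : ks (suf p l) = ks l. Proof. by rewrite -{2}pre_sufE ks_comp // pre_suf. Qed.
End Prefix.

Lemma factor_comp mu nu : ks mu = kr nu ->
  pre (kd mu) (kcomp mu nu) = mu /\ suf (kd mu) (kcomp mu nu) = nu.
Proof.
move=> munu.
have dmn : kd (kcomp mu nu) = degD (kd mu) (kd nu) by rewrite kd_comp.
have [d1 d2 e3 e4] : factor_at (kd mu) (kcomp mu nu) (pre (kd mu) (kcomp mu nu),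
    suf (kd mu) (kcomp mu nu)) by apply: factorP; rewrite dmn dleDr.
rewrite dmn degBD in d2.
have := @kfact_uniq _ G (kd mu) (kd nu) _ _ _ _ d1 d2 e3 erefl erefl munu.
by rewrite -e4 => /(_ erefl).
Qed.
Lemma pre_comp mu nu : ks mu = kr nu -> pre (kd mu) (kcomp mu nu) = mu.
Proof. by case/factor_comp. Qed.
Lemma suf_comp mu nu : ks mu = kr nu -> suf (kd mu) (kcomp mu nu) = nu.
Proof. by case/factor_comp. Qed.

Lemma pre0 l : pre (deg0 k) l = kr l.
Proof. by have := @pre_comp (kr l) l (ks_r l); rewrite kd_id kcomp_id_l. Qed.
Lemma pre_full l : pre (kd l) l = l.
Proof. by have := @pre_comp l (ks l) (esym (kr_s l)); rewrite kcomp_id_r. Qed.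
Lemma suf_full l : suf (kd l) l = ks l.
Proof. by have := @suf_comp l (ks l) (esym (kr_s l)); rewrite kcomp_id_r. Qed.

Lemma factor_compl p mu nu : ks mu = kr nu -> dle p (kd mu) ->
  pre p (kcomp mu nu) = pre p mu /\ suf p (kcomp mu nu) = kcomp (suf p mu) nu.
Proof.
move=> munu pmu.
have -> : kcomp mu nu = kcomp (pre p mu) (kcomp (suf p mu) nu).
  by rewrite kcompA ?pre_sufE ?pre_suf ?suf_s.
have [] := @factor_comp (pre p mu) (kcomp (suf p mu) nu).
  by rewrite kr_comp ?suf_s ?pre_suf.
by rewrite pre_deg // => -> ->.
Qed.

Lemma pre_pre p q l : dle p q -> dle q (kd l) -> pre p (pre q l) = pre p l.
Proof.
move=> pq ql; have pql : dle p (kd (pre q l)) by rewrite pre_deg.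
by rewrite -{2}(pre_sufE ql) (proj1 (factor_compl (pre_suf ql) pql)).
Qed.

Lemma pre_compr l z q : ks l = kr z -> dle q (kd z) ->
  pre (degD (kd l) q) (kcomp l z) = kcomp l (pre q z).
Proof.
move=> lz qz.
have -> : kcomp l z = kcomp (kcomp l (pre q z)) (suf q z).
  by rewrite -kcompA ?pre_sufE ?pre_suf ?pre_r.
have <- : kd (kcomp l (pre q z)) = degD (kd l) q by rewrite kd_comp ?pre_r ?pre_deg.
by rewrite pre_comp // ks_comp ?pre_suf ?pre_r.
Qed.

Lemma suf_suf p q l : dle (degD p q) (kd l) -> suf q (suf p l) = suf (degD p q) l.
Proof.
move=> pql.
have pl : dle p (kd l) := dle_trans (dleDr p q) pql.
have qsl : dle q (kd (suf p l)).
  apply/forallP => i; rewrite suf_deg // ffunE.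
  by move/forallP: pql => /(_ i); rewrite ffunE leq_subRL // ?(forallP pl).
have E : l = kcomp (kcomp (pre p l) (pre q (suf p l))) (suf q (suf p l)).
  by rewrite -kcompA ?pre_sufE ?pre_suf ?pre_r.
have dpq : kd (kcomp (pre p l) (pre q (suf p l))) = degD p q.
  by rewrite kd_comp ?pre_r ?pre_suf // !pre_deg.
by rewrite {2}E -dpq suf_comp // ks_comp ?pre_suf ?pre_r.
Qed.

End Factorization.

Section InfinitePaths.
Variables (k : nat) (G : kgraph k).
Local Notation kmor := (kmor G).
Local Notation kr := (@kr k G).
Local Notation ks := (@ks k G).
Local Notation kd := (@kd k G).
Local Notation kcomp := (@kcomp k G).

(* An infinite path is encoded by the family of its initial segments [x p] of
   every degree [p]. *)
Definition ipath := deg k -> kmor.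
Definition is_ipath (x : ipath) :=
  (forall p, kd (x p) = p) /\ (forall p q, x p = pre p (x (degD p q))).

Definition ishift p (x : ipath) : ipath := fun q => suf p (x (degD p q)).
Definition icat l (x : ipath) : ipath := fun q => pre q (kcomp l (x q)).

Section Ipath.
Variable x : ipath.
Hypothesis x_ipath : is_ipath x.

Lemma ipath_deg p : kd (x p) = p. Proof. by case: x_ipath. Qed.
Lemma ipath_pre p q : dle p q -> x p = pre p (x q).
Proof. by case: x_ipath => _ xpre pq; rewrite -{1}(degDB pq) -xpre. Qed.
Lemma ipath_r p : x (deg0 k) = kr (x p).
Proof. by rewrite (ipath_pre (dle0 p)) pre0. Qed.
Lemma ipath_dle p q : dle p (kd (x (degD p q))).
Proof. by rewrite ipath_deg dleDr. Qed.

Lemma ishift_ipath p : is_ipath (ishift p x).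
Proof.
split=> [q|q q']; first by rewrite /ishift suf_deg ?ipath_dle // ipath_deg degBD.
rewrite /ishift; set L := x (degD p (degD q q')).
have pqL : dle (degD p q) (kd L) by rewrite /L ipath_deg degDA dleDr.
have -> : x (degD p q) = pre (degD p q) L by apply: ipath_pre; rewrite degDA dleDr.
have ppq : dle p (kd (pre (degD p q) L)) by rewrite pre_deg ?dleDr.
rewrite -{2}(pre_sufE pqL) (proj2 (factor_compl (pre_suf pqL) ppq)).
have dq : kd (suf p (pre (degD p q) L)) = q by rewrite suf_deg // pre_deg // degBD.
by rewrite -[q in pre q (kcomp _ _)]dq pre_comp // suf_s // pre_suf.
Qed.

Lemma ishift0 p : ishift p x (deg0 k) = ks (x p).
Proof. by rewrite /ishift degD0 -{1}(ipath_deg p) suf_full. Qed.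

Lemma ishiftD p q : ishift q (ishift p x) = ishift (degD p q) x.
Proof. by apply: funext => r; rewrite /ishift suf_suf ?degDA // ipath_deg dleDr. Qed.

Lemma ishiftK p : icat (x p) (ishift p x) = x.
Proof.
apply: funext => q; rewrite /icat /ishift.
by rewrite (proj2 x_ipath p q) pre_sufE ?ipath_dle // (proj2 x_ipath q p) degDC.
Qed.

Lemma ipath_prefix_comp l m : ks l = kr m ->
  (x (kd (kcomp l m)) = kcomp l m) <-> (x (kd l) = l /\ ishift (kd l) x (kd m) = m).
Proof.
move=> lm; rewrite kd_comp // /ishift; split=> [E|[E1 E2]].
  by rewrite E (ipath_pre (dleDr _ (kd m))) E pre_comp ?suf_comp.
have dl : dle (kd l) (kd (x (degD (kd l) (kd m)))) by rewrite ipath_deg dleDr.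
by rewrite -[LHS](pre_sufE dl) E2 -(ipath_pre (dleDr _ _)) E1.
Qed.

Section Icat.
Variable l : kmor.
Hypothesis lx : ks l = x (deg0 k).

Lemma icat_s q : ks l = kr (x q). Proof. by rewrite lx (ipath_r q). Qed.

Lemma icat_ipath : is_ipath (icat l x).
Proof.
have dlx q : kd (kcomp l (x q)) = degD (kd l) q.
  by rewrite kd_comp ?ipath_deg //; apply: icat_s.
split=> [q|q q']; first by rewrite /icat pre_deg // dlx dleDl.
rewrite /icat pre_pre ?dleDr ?dlx ?dleDl //.
have lxq := icat_s q.
have xq : ks (x q) = kr (suf q (x (degD q q'))).
  by rewrite (ipath_pre (dleDr q q')) pre_suf // ipath_dle.
rewrite -(pre_sufE (ipath_dle q q')) -(ipath_pre (dleDr q q')) kcompA //.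
by rewrite [RHS](proj1 (factor_compl _ _)) ?dlx ?dleDl // ks_comp.
Qed.

Lemma icat_prefix : icat l x (kd l) = l.
Proof. exact: pre_comp (icat_s _). Qed.

Lemma icat0 : icat l x (deg0 k) = kr l.
Proof. by rewrite /icat pre0 (kr_comp (icat_s _)). Qed.

Lemma icatK : ishift (kd l) (icat l x) = x.
Proof.
apply: funext => q; rewrite /ishift /icat (pre_compr (icat_s _)) ?ipath_deg ?dleDl //.
by rewrite -(ipath_pre (dleDl _ _)) (suf_comp (icat_s _)).
Qed.

Lemma icat_comp m : ks m = kr l -> icat m (icat l x) = icat (kcomp m l) x.
Proof.
move=> ml; apply: funext => q; rewrite /icat.
have lxq := icat_s q.
have ql : dle q (kd (kcomp l (x q))) by rewrite kd_comp ?ipath_deg // dleDl.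
have mlx : ks m = kr (kcomp l (x q)) by rewrite kr_comp.
rewrite -kcompA // -{2}(pre_sufE ql) kcompA ?pre_suf ?pre_r //.
rewrite [RHS](proj1 (factor_compl _ _)) //.
  by rewrite ks_comp ?pre_suf // pre_r.
by rewrite kd_comp ?pre_r // pre_deg // dleDl.
Qed.

End Icat.
End Ipath.

Section Existence.
Hypothesis no_src : no_sources G.

Definition diag_step v : kmor :=
  if pselect (exists l, kr l = v /\ kd l = ones k 1) is left H then projT1 (cid H) else v.

Lemma diag_stepP v : is_vertex v -> kr (diag_step v) = v /\ kd (diag_step v) = ones k 1.
Proof.
move=> vv; rewrite /diag_step; case: pselect => [H|[]]; first by case: (cid H).
exact: no_src.
Qed.

Variable u : kmor.
Hypothesis uv : is_vertex u.

Fixpoint diag_path (N : nat) : kmor :=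
  if N is N'.+1 then kcomp (diag_path N') (diag_step (ks (diag_path N'))) else u.

Lemma diag_path_deg N : kd (diag_path N) = ones k N /\ kr (diag_path N) = u.
Proof.
elim: N => [|N [dN rN]] /=.
  by rewrite vertex_r //; split=> //; move/eqP: uv => ->; apply/ffunP => i; rewrite !ffunE.
have [r1 d1] := diag_stepP (is_vertex_s (diag_path N)).
rewrite kd_comp ?kr_comp ?r1 // d1 dN; split=> //.
by apply/ffunP => i; rewrite !ffunE addn1.
Qed.

Lemma diag_path_pre N M : (N <= M)%N -> pre (ones k N) (diag_path M) = diag_path N.
Proof.
elim: M => [|M IH]; first by rewrite leqn0 => /eqP ->; rewrite -(proj1 (diag_path_deg 0)) pre_full.
rewrite leq_eqVlt => /orP [/eqP ->|]; first by rewrite -(proj1 (diag_path_deg _)) pre_full.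
rewrite ltnS => NM /=.
have [r1 _] := diag_stepP (is_vertex_s (diag_path M)).
by rewrite (proj1 (factor_compl _ _)) ?r1 ?IH // (proj1 (diag_path_deg M)) dle_ones2.
Qed.

Lemma ipath_exists : exists y, is_ipath y /\ y (deg0 k) = u.
Proof.
have dle_diag p N : (maxdeg p <= N)%N -> dle p (kd (diag_path N)).
  by move=> pN; rewrite (proj1 (diag_path_deg N)); apply: dle_trans (dle_ones p) (dle_ones2 _ pN).
exists (fun p => pre p (diag_path (maxdeg p))).
split; last by rewrite pre0 (proj2 (diag_path_deg _)).
split=> [p|p q]; first by rewrite pre_deg ?dle_diag.
have pq : (maxdeg p <= maxdeg (degD p q))%N by apply/maxdeg_mono/dleDr.
rewrite pre_pre ?dleDr ?dle_diag // -(diag_path_pre pq) pre_pre ?dle_ones //.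
by rewrite (proj1 (diag_path_deg _)) dle_ones2.
Qed.

End Existence.
End InfinitePaths.

Local Open Scope ring_scope.

Lemma big_pred1_uniq (T : eqType) (V : nmodType) (s : seq T) (a : T) (F : T -> V) :
  uniq s -> a \in s -> \sum_(i <- s | i == a) F i = F a.
Proof. by move=> s_uniq sa; rewrite -big_filter (filter_pred1_uniq s_uniq sa) big_seq1. Qed.

Section LinearOperators.
Variables (R : comNzRingType) (X : Type).

Definition linearb (f : (X -> R) -> X -> R) : bool :=
  `[< (forall g h, f (fun x => g x + h x) = (fun x => f g x + f h x)) /\
      (forall c g, f (fun x => c * g x) = (fun x => c * f g x)) >].

Record linop := LinOp { linop_fun :> (X -> R) -> X -> R; linop_linear : linearb linop_fun }.

Lemma linop_inj (f g : linop) : linop_fun f = linop_fun g -> f = g.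
Proof. by case: f g => f fP [g gP] /= fg; subst g; congr LinOp; exact: bool_irrelevance. Qed.

Lemma linop_eqP (f g : linop) : (forall h x, f h x = g h x) -> f = g.
Proof. by move=> fg; apply: linop_inj; apply: funext => h; apply: funext. Qed.

Lemma linopD (f : linop) g h : f (fun x => g x + h x) = (fun x => f g x + f h x).
Proof. by case: f => f /= /asboolP []. Qed.
Lemma linopZ (f : linop) c g : f (fun x => c * g x) = (fun x => c * f g x).
Proof. by case: f => f /= /asboolP []. Qed.

Fact linear_zero : linearb (fun _ _ => 0).
Proof. by apply/asboolP; split=> *; apply: funext => x; rewrite ?addr0 ?mulr0. Qed.
Fact linear_add (f g : linop) : linearb (fun h x => f h x + g h x).
Proof.
apply/asboolP; split=> *; apply: funext => x; first by rewrite !linopD addrACA.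
by rewrite !linopZ mulrDr.
Qed.
Fact linear_opp (f : linop) : linearb (fun h x => - f h x).
Proof.
apply/asboolP; split=> *; apply: funext => x; first by rewrite linopD opprD.
by rewrite linopZ mulrN.
Qed.
Fact linear_id : linearb id.
Proof. by apply/asboolP; split. Qed.
Fact linear_comp (f g : linop) : linearb (fun h => f (g h)).
Proof. by apply/asboolP; split=> *; rewrite ?linopD ?linopZ. Qed.
Fact linear_scale c (f : linop) : linearb (fun h x => c * f h x).
Proof.
apply/asboolP; split=> *; apply: funext => x; first by rewrite linopD mulrDr.
by rewrite linopZ mulrCA.
Qed.

Definition linop_zero := LinOp linear_zero.
Definition linop_add f g := LinOp (linear_add f g).
Definition linop_opp f := LinOp (linear_opp f).
Definition linop_one := LinOp linear_id.
Definition linop_mul f g := LinOp (linear_comp f g).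
Definition linop_scale c f := LinOp (linear_scale c f).

HB.instance Definition _ := gen_eqMixin linop.
HB.instance Definition _ := gen_choiceMixin linop.

Fact linop_addA : associative linop_add.
Proof. by move=> *; apply: linop_eqP => * /=; rewrite addrA. Qed.
Fact linop_addC : commutative linop_add.
Proof. by move=> *; apply: linop_eqP => * /=; rewrite addrC. Qed.
Fact linop_add0 : left_id linop_zero linop_add.
Proof. by move=> *; apply: linop_eqP => * /=; rewrite add0r. Qed.
Fact linop_addN : left_inverse linop_zero linop_opp linop_add.
Proof. by move=> *; apply: linop_eqP => * /=; rewrite addNr. Qed.
HB.instance Definition _ :=
  GRing.isZmodule.Build linop linop_addA linop_addC linop_add0 linop_addN.

(* The point [x0] of [X] only serves to prove [1 != 0]; hence this alias. *)
Definition linop_at (x0 : X) : Type := linop.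

Variable x0 : X.
Local Notation E := (linop_at x0).
HB.instance Definition _ := Choice.on E.
HB.instance Definition _ := GRing.Zmodule.on E.

Fact linop_mulA : associative (linop_mul : E -> E -> E).
Proof. by move=> *; apply: linop_eqP. Qed.
Fact linop_mul1 : left_id (linop_one : E) linop_mul.
Proof. by move=> *; apply: linop_eqP. Qed.
Fact linop_mulr1 : right_id (linop_one : E) linop_mul.
Proof. by move=> *; apply: linop_eqP. Qed.
Fact linop_mulDl : left_distributive (linop_mul : E -> E -> E) +%R.
Proof. by move=> *; apply: linop_eqP. Qed.
Fact linop_mulDr : right_distributive (linop_mul : E -> E -> E) +%R.
Proof. by move=> f *; apply: linop_eqP => h /=; rewrite linopD. Qed.
Fact linop_one_neq0 : (linop_one : E) != 0.
Proof.
apply/eqP => /(congr1 (fun f : E => linop_fun f (fun _ => 1) x0)) /= /eqP.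
by rewrite oner_eq0.
Qed.
HB.instance Definition _ := GRing.Zmodule_isNzRing.Build E
  linop_mulA linop_mul1 linop_mulr1 linop_mulDl linop_mulDr linop_one_neq0.

Fact linop_scaleA a b (f : E) : linop_scale a (linop_scale b f) = linop_scale (a * b) f.
Proof. by apply: linop_eqP => * /=; rewrite mulrA. Qed.
Fact linop_scale1 : left_id 1 (linop_scale : R -> E -> E).
Proof. by move=> *; apply: linop_eqP => * /=; rewrite mul1r. Qed.
Fact linop_scaleDr : right_distributive (linop_scale : R -> E -> E) +%R.
Proof. by move=> *; apply: linop_eqP => * /=; rewrite mulrDr. Qed.
Fact linop_scaleDl (f : E) : {morph linop_scale^~ f : a b / a + b}.
Proof. by move=> *; apply: linop_eqP => * /=; rewrite mulrDl. Qed.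
HB.instance Definition _ := GRing.Zmodule_isLmodule.Build R E
  linop_scaleA linop_scale1 linop_scaleDr linop_scaleDl.
Fact linop_scaleAl a (f g : E) : a *: (f * g) = (a *: f) * g.
Proof. exact: linop_eqP. Qed.
HB.instance Definition _ := GRing.Lmodule_isLalgebra.Build R E linop_scaleAl.
Fact linop_scaleAr a (f g : E) : a *: (f * g) = f * (a *: g).
Proof. by apply: linop_eqP => h /=; rewrite linopZ. Qed.
HB.instance Definition _ := GRing.Lalgebra_isAlgebra.Build R E linop_scaleAr.

Lemma linop_mulE (f g : E) h : (f * g) h = f (g h). Proof. by []. Qed.
Lemma linop_sumE (I : Type) (s : seq I) (C : pred I) (F : I -> E) h x :
  (\sum_(i <- s | C i) F i) h x = \sum_(i <- s | C i) F i h x.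
Proof. by elim: s => [|i s IH]; rewrite ?big_nil // !big_cons; case: (C i) => //=; rewrite IH. Qed.

End LinearOperators.

Section PathRepresentation.
Variables (k : nat) (G : kgraph k) (R : comNzRingType) (l0 : kmor G).
Local Notation kmor := (kmor G).
Local Notation kr := (@kr k G).
Local Notation ks := (@ks k G).
Local Notation kd := (@kd k G).
Local Notation kcomp := (@kcomp k G).

Definition degZ (p : deg k) : {ffun 'I_k -> int} := [ffun i => (p i)%:Z].

Lemma degZD p q : degZ (degD p q) = degZ p + degZ q.
Proof. by apply/ffunP => i; rewrite !ffunE PoszD. Qed.

Lemma degZ0 : degZ (deg0 k) = 0.
Proof. by apply/ffunP => i; rewrite !ffunE. Qed.

Lemma degZ_inj : injective degZ.
Proof. by move=> p q /ffunP pq; apply/ffunP => i; have := pq i; rewrite !ffunE => -[]. Qed.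

(* The states are pairs (infinite path, degree counter); [rep_S l] strips the
   prefix [l] and [rep_Sst l] prepends it.  The counter records the net degree
   moved, which lets evaluation at a single state tell apart the [s_l] of
   different degrees. *)
Definition state := (ipath G * {ffun 'I_k -> int})%type.
Definition rep := linop_at R ((fun _ => l0, 0) : state).

Definition guarded (C : state -> Prop) (phi : state -> state) (g : state -> R) s :=
  if `[< C s >] then g (phi s) else 0.

Fact linear_guarded C phi : linearb (guarded C phi).
Proof.
by apply/asboolP; split=> *; apply: funext => s; rewrite /guarded; case: ifP; rewrite ?addr0 ?mulr0.
Qed.

Definition guardop C phi : rep := LinOp (linear_guarded C phi).

Lemma guardopE C phi g s : guardop C phi g s = if `[< C s >] then g (phi s) else 0.
Proof. by []. Qed.

Lemma guardopM C phi C' phi' :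
  guardop C phi * guardop C' phi' = guardop (fun s => C s /\ C' (phi s)) (phi' \o phi).
Proof.
apply: linop_eqP => h s; rewrite linop_mulE !guardopE.
have [Cs|nCs] := pselect (C s); last by rewrite !asboolF // => -[].
rewrite (asboolT Cs).
have [C's|nC's] := pselect (C' (phi s)); last by rewrite !asboolF // => -[].
by rewrite (asboolT C's) asboolT.
Qed.

Lemma guardop_ext C phi C' phi' : (forall s, C s <-> C' s) ->
  (forall s, C s -> phi s = phi' s) -> guardop C phi = guardop C' phi'.
Proof.
move=> CC' phiE; apply: linop_eqP => h s; rewrite !guardopE.
have [Cs|nCs] := pselect (C s); last by rewrite !asboolF // -CC'.
by rewrite (asboolT Cs) asboolT -?CC' ?phiE.
Qed.

Lemma guardop0 C phi : (forall s, ~ C s) -> guardop C phi = 0.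
Proof. by move=> nC; apply: linop_eqP => h s; rewrite guardopE asboolF. Qed.

Definition rep_P v : rep := guardop (fun s => is_ipath s.1 /\ s.1 (deg0 k) = v) id.
Definition rep_S l : rep := guardop (fun s => is_ipath s.1 /\ s.1 (kd l) = l)
  (fun s => (ishift (kd l) s.1, s.2 - degZ (kd l))).
Definition rep_Sst l : rep := guardop (fun s => is_ipath s.1 /\ ks l = s.1 (deg0 k))
  (fun s => (icat l s.1, s.2 + degZ (kd l))).

Lemma rep_PP v w : rep_P v * rep_P w = if v == w then rep_P v else 0.
Proof.
rewrite guardopM; case: eqP => [<-|vw]; first by apply: guardop_ext => // s; split=> [[]|].
by apply: guardop0 => s [[_ sv] [_ sw]]; apply: vw; rewrite -sv -sw.
Qed.

Lemma rep_SM l m : ks l = kr m -> rep_S l * rep_S m = rep_S (kcomp l m).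
Proof.
move=> lm; rewrite guardopM; apply: guardop_ext => -[x z] /=.
  split=> [[[xp xl] [_ xm]]|[xp xlm]]; first by split=> //; apply/(ipath_prefix_comp xp lm).
  by have [? ?] := (ipath_prefix_comp xp lm).1 xlm; split; split=> //; apply: ishift_ipath.
by move=> [[xp _] _]; rewrite /= ishiftD // kd_comp // degZD opprD addrA.
Qed.

Lemma rep_SstM l m : ks l = kr m -> rep_Sst m * rep_Sst l = rep_Sst (kcomp l m).
Proof.
move=> lm; rewrite guardopM; apply: guardop_ext => -[x z] /=.
  rewrite ks_comp //; split=> [[]//|[xp mx]].
  by split=> //; split; [apply: icat_ipath | rewrite icat0].
move=> [[xp mx] _]; rewrite icat_comp // kd_comp // degZD.
by rewrite (addrC (degZ (kd l))) addrA.
Qed.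

Lemma rep_Pr_S l : rep_P (kr l) * rep_S l = rep_S l.
Proof.
rewrite guardopM; apply: guardop_ext => // -[x z] /=.
by split=> [[]//|[xp xl]]; split=> //; rewrite (ipath_r xp (kd l)) xl.
Qed.

Lemma rep_S_Ps l : rep_S l * rep_P (ks l) = rep_S l.
Proof.
rewrite guardopM; apply: guardop_ext => // -[x z] /=.
by split=> [[]//|[xp xl]]; split=> //; split; [apply: ishift_ipath | rewrite ishift0 // xl].
Qed.

Lemma rep_Ps_Sst l : rep_P (ks l) * rep_Sst l = rep_Sst l.
Proof.
rewrite guardopM; apply: guardop_ext => // -[x z] /=.
by split=> [[]//|[xp lx]].
Qed.

Lemma rep_Sst_Pr l : rep_Sst l * rep_P (kr l) = rep_Sst l.
Proof.
rewrite guardopM; apply: guardop_ext => // -[x z] /=.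
by split=> [[]//|[xp lx]]; split=> //; split; [apply: icat_ipath | rewrite icat0].
Qed.

Lemma rep_Sst_S l m : kd l = kd m -> rep_Sst l * rep_S m = if l == m then rep_P (ks l) else 0.
Proof.
move=> dlm; rewrite guardopM; case: eqP => [<-|lm]; last first.
  by apply: guardop0 => -[x z] /= [[xp lx] [_]]; rewrite -dlm icat_prefix.
apply: guardop_ext => -[x z] /=.
  split=> [[[]//]|[xp lx]]; split=> //.
  by split; [apply: icat_ipath | rewrite icat_prefix].
by move=> [[xp lx] _]; rewrite icatK ?addrK.
Qed.

Lemma rep_S_Sst l : rep_S l * rep_Sst l = guardop (fun s => is_ipath s.1 /\ s.1 (kd l) = l) id.
Proof.
rewrite guardopM; apply: guardop_ext => -[x z] /=.
  split=> [[]//|[xp xl]]; split=> //.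
  by split; [apply: ishift_ipath | rewrite ishift0 // xl].
by move=> [[xp xl] _]; rewrite -{1}xl ishiftK // subrK.
Qed.

Lemma rep_sum_S_Sst v n (s : seq kmor) : uniq s ->
  (forall l, (l \in s) = (kr l == v) && (kd l == n)) ->
  rep_P v = \sum_(l <- s) rep_S l * rep_Sst l.
Proof.
move=> s_uniq s_mem; apply: linop_eqP => h [x z]; rewrite linop_sumE.
under eq_bigr => l _ do rewrite rep_S_Sst guardopE /=.
rewrite guardopE /=.
have [xp|nxp] := pselect (is_ipath x); last first.
  rewrite asboolF => [|[]//]; rewrite big1 // => l _.
  by rewrite asboolF // => -[].
rewrite (eq_big_seq (fun l => if l == x n then h (x, z) else 0)); last first.
  move=> l; rewrite s_mem => /andP [_ /eqP <-].
  by case: eqP => [->|xl]; [rewrite asboolT ?ipath_deg | rewrite asboolF // => -[_ /esym]].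
rewrite -big_mkcond /=.
have [xv|xv] := pselect (x (deg0 k) = v).
  by rewrite asboolT // big_pred1_uniq // s_mem ipath_deg // -(ipath_r xp) xv !eqxx.
rewrite asboolF => [|[]//]; rewrite big1_seq // => l /andP [/eqP ->].
by rewrite s_mem ipath_deg // => /andP [/eqP xnv _]; case: xv; rewrite (ipath_r xp n).
Qed.

Lemma rep_KP_family : is_KP_family rep_P rep_S rep_Sst.
Proof.
split.
- by split=> [v _|v w _ _ /negbTE vw]; rewrite rep_PP ?eqxx ?vw.
- by move=> l m _ _ ml; rewrite rep_SM ?rep_SstM.
- by move=> l _; rewrite rep_Pr_S rep_S_Ps rep_Ps_Sst rep_Sst_Pr.
- by move=> l m _ _; apply: rep_Sst_S.
- by move=> v n _ _ s; apply: rep_sum_S_Sst.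
Qed.

Definition counter_at0 (s : state) : R := (s.2 == 0)%:R.

Lemma rep_sK_eval a0 y b : is_ipath y -> y (deg0 k) = ks a0 ->
  sK rep_P rep_S b counter_at0 (icat a0 y, degZ (kd a0)) = (b == a0)%:R.
Proof.
move=> yp ya0; have a0y := esym ya0.
rewrite /sK /counter_at0; case: ifP => bv; rewrite guardopE /=.
  have [eba0|ba0] := eqVneq b a0.
    subst b; move/eqP: (bv) => ->; rewrite degZ0 eqxx asboolT //.
    by split; [apply: icat_ipath | rewrite icat0 // vertex_r].
  have [da0|da0] := eqVneq (kd a0) (deg0 k); last first.
    by rewrite -degZ0 (inj_eq degZ_inj) (negbTE da0); case: ifP.
  rewrite asboolF // => -[_]; rewrite icat0 // vertex_r //; last exact/eqP.
  by move=> /eqP; rewrite eq_sym (negbTE ba0).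
have [->|ba0] := eqVneq b a0.
  by rewrite asboolT ?subrr ?eqxx //; split; [apply: icat_ipath | rewrite icat_prefix].
rewrite subr_eq0 (inj_eq degZ_inj); have [dab|] := eqVneq (kd a0) (kd b); last by case: asboolP.
by rewrite asboolF // => -[_]; rewrite -dab icat_prefix // => /esym/eqP; rewrite (negbTE ba0).
Qed.

End PathRepresentation.

Section ComposableSeq.
Variables (k : nat) (G : kgraph k).

Lemma kcomp_seq_rs (b0 : kmor G) bs : composable_seq b0 bs ->
  kr (kcomp_seq b0 bs) = kr b0 /\ ks (kcomp_seq b0 bs) = ks (last b0 bs).
Proof.
elim: bs b0 => [//|b bs IH] b0 /= /andP [/eqP b0b bsp].
have /IH [-> ->] : composable_seq (kcomp b0 b) bs.
  by case: bs {IH} bsp => //= c bs; rewrite ks_comp.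
rewrite kr_comp //; split=> //.
by case: bs {IH bsp} => //=; rewrite ks_comp.
Qed.

Lemma closed_path_of_successors (F : seq (kmor G * kmor G)) :
  F != [::] -> (forall q, q \in F -> exists2 p, p \in F & kr p.2 = ks q.2) ->
  exists (p0 : kmor G * kmor G) (ps : seq (kmor G * kmor G)),
    [/\ p0 \in F, all (fun p => p \in F) ps,
        composable_seq p0.2 (map snd ps) &
        kr (kcomp_seq p0.2 (map snd ps)) = ks (kcomp_seq p0.2 (map snd ps))].
Proof.
case: F => [//|q0 F'] _; set F := q0 :: F' => succ.
pose next (q : kmor G * kmor G) := nth q0 F (find (fun p => kr p.2 == ks q.2) F).
have nextP q : q \in F -> next q \in F /\ kr (next q).2 = ks q.2.
  move=> /succ [p pF pq].
  have hasF : has (fun p => kr p.2 == ks q.2) F by apply/hasP; exists p => //; apply/eqP.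
  by split; [rewrite mem_nth // -has_find | apply/eqP; exact: (nth_find q0 hasF)].
have q0F : q0 \in F := mem_head q0 F'.
have [i [n loop]] := iter_loop q0F (fun q qF => (nextP q qF).1).
set p0 := iter i next q0 in loop.
have iterF t : iter t next q0 \in F by elim: t => //= t /nextP [].
have p0F : p0 \in F by apply: iterF.
exists p0, (traject next (next p0) n).
have trajF : all (mem F) (traject next p0 n.+1).
  by apply/allP => _ /trajectP [t _ ->]; rewrite -iterD; apply: iterF.
have succ_path : path (fun q q' => ks q.2 == kr q'.2) p0 (traject next (next p0) n).
  apply: (sub_in_path _ trajF (fpath_traject next p0 n)) => q q' /[!inE] qF _ /eqP <-.
  by rewrite (nextP q qF).2.
have compo : composable_seq p0.2 (map snd (traject next (next p0) n)).
  by rewrite /composable_seq path_map.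
have [-> ->] := kcomp_seq_rs compo.
split=> //; first by case/andP: trajF.
have lastF : iter n next p0 \in F by rewrite -iterD iterF.
by rewrite last_map last_traject -(nextP _ lastF).2 -iterS loop.
Qed.
End ComposableSeq.

Section KPFamily.
Variables (k : nat) (G : kgraph k) (R : comNzRingType) (A : algType R)
  (P S Sst : kmor G -> A).
Hypothesis KP : is_KP_family P S Sst.
Local Notation sa := (sK P S).
Local Notation sb := (sKs P Sst).

Lemma P_mul_P v w : is_vertex v -> is_vertex w -> P v * P w = if v == w then P v else 0.
Proof.
case: KP => [[Pidem Porth] _ _ _ _] vv wv.
by case: eqVneq => [<-|vw]; [exact: Pidem | exact: Porth].
Qed.

Lemma sKs_mul_sK b b' : kd b = kd b' -> sb b * sa b' = if b == b' then P (ks b) else 0.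
Proof.
move=> dbb'; have vb' : is_vertex b' = is_vertex b by rewrite /is_vertex dbb'.
rewrite /sKs /sK vb'; case: ifP => bv; first by rewrite P_mul_P ?vertex_s ?vb'.
by case: KP => _ _ _ KP3 _; apply: KP3; rewrite ?vb' ?bv.
Qed.

Lemma sK_mul_Ps a : sa a * P (ks a) = sa a.
Proof.
rewrite /sK; case: ifP => av; first by rewrite vertex_s // P_mul_P // eqxx.
by case: KP => _ _ /(_ a (negbT av)) [_ -> _ _].
Qed.

Lemma P_mul_sK v a : is_vertex v -> P v * sa a = if kr a == v then sa a else 0.
Proof.
move=> vv; rewrite /sK; case: ifP => av.
  by rewrite vertex_r // P_mul_P // eq_sym; case: eqP => // ->.
case: KP => _ _ /(_ a (negbT av)) [Pr_S _ _ _] _.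
case: eqP => [<-//|av']; rewrite -Pr_S mulrA P_mul_P ?is_vertex_r //.
by case: eqP => [E|_]; [case: av' | rewrite mul0r].
Qed.

Lemma sKs_mul_P b w : is_vertex w -> sb b * P w = if kr b == w then sb b else 0.
Proof.
move=> wv; rewrite /sKs; case: ifP => bv; first by rewrite vertex_r // P_mul_P.
case: KP => _ _ /(_ b (negbT bv)) [_ _ _ Sst_Pr] _.
case: eqP => [<-//|bw]; rewrite -Sst_Pr -mulrA P_mul_P ?is_vertex_r //.
by case: eqP => [E|_]; [case: bw | rewrite mulr0].
Qed.

Lemma KPgen_sK a : KPgen P S Sst (sa a).
Proof. by rewrite /sK; case: ifP => av; [apply: KPgen_P | apply: KPgen_S; rewrite av]. Qed.

End KPFamily.

Section AlgHom.
Variables (R : comNzRingType) (A B : algType R) (f : A -> B).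
Hypothesis fhom : unital_alg_hom f.

Lemma alg_hom0 : f 0 = 0.
Proof. by case: fhom => fD _ _ _; apply: (addrI (f 0)); rewrite -fD !addr0. Qed.

Lemma alg_homZ c x : f (c *: x) = c *: f x.
Proof. by case: fhom. Qed.

Lemma alg_hom_sum (I : Type) (s : seq I) (C : pred I) (F : I -> A) :
  f (\sum_(i <- s | C i) F i) = \sum_(i <- s | C i) f (F i).
Proof.
case: fhom => fD _ _ _; have f0 := alg_hom0.
by elim: s => [|i s IH]; rewrite ?big_nil // !big_cons; case: (C i); rewrite ?fD IH.
Qed.

End AlgHom.

Section Independence.
Variables (k : nat) (G : kgraph k) (R : comNzRingType) (A : algType R)
  (P S Sst : kmor G -> A).
Hypotheses (no_src : no_sources G) (KPA : is_KP_algebra P S Sst).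

Lemma KP_algebra_hom (B : algType R) (Q T Tst : kmor G -> B) : is_KP_family Q T Tst ->
  exists f : A -> B, unital_alg_hom f /\ forall l, f (sK P S l) = sK Q T l.
Proof.
case: KPA => _ _ /(_ B Q T Tst) univ /univ [[f [fhom [fP fS _]]] _].
exists f; split=> // l; rewrite /sK; case: ifP => lv; [exact: fP | by apply: fS; rewrite lv].
Qed.

Lemma sK_coef_sum_eq0 (I : Type) (s : seq I) (C : pred I) (lam : I -> kmor G) (c : I -> R) :
  \sum_(i <- s | C i) c i *: sK P S (lam i) = 0 ->
  forall l, \sum_(i <- s | C i && (lam i == l)) c i = 0.
Proof.
move=> sum0 l.
have [y [yp yl]] := ipath_exists no_src (is_vertex_s l).
have [f [fhom fsK]] := KP_algebra_hom (rep_KP_family R l).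
have := congr1 f sum0; rewrite alg_hom_sum // alg_hom0 //.
under eq_bigr => i _ do rewrite alg_homZ // fsK.
move=> /(congr1 (fun g : rep R l => g (@counter_at0 _ G R) (icat l y, degZ (kd l)))) /=.
rewrite linop_sumE big_mkcondr /=.
by under eq_bigr => i _ do rewrite rep_sK_eval // mulr_natr mulrb.
Qed.

End Independence.

Section NormalForm.
Variables (k : nat) (G : kgraph k) (R : comNzRingType) (A : algType R)
  (P S Sst : kmor G -> A).
Hypotheses (no_src : no_sources G) (KPA : is_KP_algebra P S Sst).
Variables (F : seq (kmor G * kmor G)) (rc : kmor G * kmor G -> R) (m : deg k).
Hypotheses (F_uniq : uniq F) (F_deg : forall p, p \in F -> kd p.2 = m)
  (F_src : forall p, p \in F -> ks p.1 = ks p.2)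
  (F_coef : forall p, p \in F -> rc p != 0).
Local Notation sa := (sK P S).
Local Notation sb := (sKs P Sst).
Local Notation nf_sum C := (\sum_(p <- F | C p) rc p *: (sa p.1 * sb p.2)).

Let KP : is_KP_family P S Sst. Proof. by case: KPA. Qed.

Lemma nf_sum_mulr_sK (C : pred _) b : kd b = m ->
  nf_sum C * sa b = \sum_(p <- F | C p && (p.2 == b)) rc p *: sa p.1.
Proof.
move=> db; rewrite mulr_suml big_mkcondr big_seq_cond [RHS]big_seq_cond.
apply: eq_bigr => p /andP [pF _]; rewrite -scalerAl -mulrA (sKs_mul_sK KP) ?F_deg ?db //.
by case: eqP => _; rewrite ?mulr0 ?scaler0 // -(F_src pF) (sK_mul_Ps KP).
Qed.

Lemma nf_sum_mulr_sKsKs (C : pred _) b : kd b = m ->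
  nf_sum C * (sa b * sb b) = nf_sum (fun p => C p && (p.2 == b)).
Proof.
move=> db; rewrite mulrA nf_sum_mulr_sK // mulr_suml.
by apply: eq_bigr => p /andP [_ /eqP <-]; rewrite scalerAl.
Qed.

Lemma P_mul_nf_sum (C : pred _) v : is_vertex v ->
  P v * nf_sum C = nf_sum (fun p => C p && (kr p.1 == v)).
Proof.
move=> vv; rewrite mulr_sumr big_mkcondr; apply: eq_bigr => p _.
by rewrite -scalerAr mulrA (P_mul_sK KP) //; case: eqP => _; rewrite ?mul0r ?scaler0.
Qed.

Lemma nf_sum_mulr_P (C : pred _) w : is_vertex w ->
  nf_sum C * P w = nf_sum (fun p => C p && (kr p.2 == w)).
Proof.
move=> wv; rewrite mulr_suml big_mkcondr; apply: eq_bigr => p _.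
by rewrite -scalerAl -mulrA (sKs_mul_P KP) //; case: eqP => _; rewrite ?mulr0 ?scaler0.
Qed.

Lemma nf_sum_eq0_notin (C : pred _) : nf_sum C = 0 -> forall p, p \in F -> ~~ C p.
Proof.
move=> sum0 p0 p0F; apply/negP => Cp0.
have sum1 : \sum_(p <- F | C p && (p.2 == p0.2)) rc p *: sa p.1 = 0.
  by rewrite -nf_sum_mulr_sK ?F_deg // sum0 mul0r.
have := sK_coef_sum_eq0 no_src KPA sum1 p0.1.
rewrite (eq_bigl (pred1 p0)) => [|p]; last first.
  apply/idP/eqP => [/andP [/andP [_ /eqP e2] /eqP e1]|->]; last by rewrite Cp0 !eqxx.
  by rewrite [p]surjective_pairing e1 e2 -surjective_pairing.
by rewrite big_pred1_uniq // => /eqP; rewrite (negbTE (F_coef p0F)).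
Qed.

Variable a : A.
Hypotheses (a_center : in_KP_center P S Sst a)
  (a_nf : a = \sum_(p <- F) rc p *: (sa p.1 * sb p.2)).

Let a_comm b : KPgen P S Sst b -> a * b = b * a.
Proof. by case: a_center => _; apply. Qed.

Lemma center_nf_r p : p \in F -> kr p.1 = kr p.2.
Proof.
move=> pF; apply/eqP; apply: contraT => ne.
have : P (kr p.1) * (a * P (kr p.2)) = 0.
  rewrite a_comm; last exact/KPgen_P/is_vertex_r.
  rewrite mulrA (P_mul_P KP) ?is_vertex_r //.
  by rewrite (negbTE ne) mul0r.
rewrite a_nf nf_sum_mulr_P ?is_vertex_r // P_mul_nf_sum ?is_vertex_r //.
by move/nf_sum_eq0_notin/(_ p pF); rewrite !eqxx.
Qed.

Lemma center_nf_hereditary mu : (exists2 p, p \in F & ks mu = kr p.2) ->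
  exists2 p, p \in F & kr mu = kr p.2.
Proof.
move=> [p pF mup].
have [/hasP [q qF /eqP muq]|none] := boolP (has (fun q => kr mu == kr q.2) F).
  by exists q.
exfalso.
have aP0 : a * P (kr mu) = 0.
  rewrite a_nf nf_sum_mulr_P ?is_vertex_r //.
  by apply: big1_seq => q /andP [/andP [_ qmu] qF]; case/hasP: none; exists q; rewrite // eq_sym.
have : P (ks mu) * a = 0.
  have := sKs_mul_sK KP (erefl (kd mu)); rewrite eqxx => <-.
  rewrite -mulrA -a_comm; last exact: KPgen_sK.
  have := P_mul_sK KP mu (is_vertex_r mu); rewrite eqxx => <-.
  by rewrite (mulrA a) aP0 mul0r mulr0.
rewrite mup a_nf P_mul_nf_sum ?is_vertex_r //.
by move/nf_sum_eq0_notin/(_ p pF); rewrite center_nf_r // eqxx.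
Qed.

Lemma center_nf_source q : q \in F -> exists2 p, p \in F & kr p.2 = ks q.2.
Proof.
move=> qF; have [/hasP [p pF /eqP pq]|none] := boolP (has (fun p => kr p.2 == ks q.2) F).
  by exists p.
exfalso.
have aP0 : a * P (ks q.2) = 0.
  rewrite a_nf nf_sum_mulr_P ?is_vertex_s //.
  by apply: big1_seq => p /andP [/andP [_ pq] pF]; case/hasP: none; exists p.
have sa_a : sa q.2 * a = 0.
  rewrite -(sK_mul_Ps KP) -mulrA -a_comm; last exact/KPgen_P/is_vertex_s.
  by rewrite aP0 mulr0.
have : a * (sa q.2 * sb q.2) = 0.
  by rewrite mulrA a_comm ?sa_a ?mul0r //; apply: KPgen_sK.
rewrite a_nf nf_sum_mulr_sKsKs ?F_deg //.
by move/nf_sum_eq0_notin/(_ q qF); rewrite eqxx.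
Qed.

End NormalForm.

Theorem lemma4p2 (k : nat) (G : kgraph k) (R : comNzRingType) (A : algType R)
    (P S Sst : kmor G -> A)
    (Hrf : row_finite G) (Hns : no_sources G)
    (HKP : is_KP_algebra P S Sst)
    (a : A) (Ha0 : a != 0) (Hcent : in_KP_center P S Sst a)
    (F : seq (kmor G * kmor G)) (rc : kmor G * kmor G -> R) (m : deg k)
    (HFuniq : uniq F)
    (HFdeg : forall p, p \in F -> kd p.2 = m)
    (HFcoef : forall p, p \in F -> rc p != 0)
    (HFsrc : forall p, p \in F -> ks p.1 = ks p.2)
    (Ha : a = \sum_(p <- F) rc p *: (sK P S p.1 * sKs P Sst p.2)) :
  [/\ (forall p, p \in F -> kr p.1 = kr p.2),
      (* (2) W = { r(beta) : (alpha,beta) in F } is hereditary upwards *)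
      (forall mu : kmor G, (exists2 p, p \in F & ks mu = kr p.2) ->
         exists2 p, p \in F & kr mu = kr p.2),
      (forall q, q \in F -> exists2 p, p \in F &
         [/\ kr p.1 = kr p.2, kr p.2 = ks q.1 & ks q.1 = ks q.2]) &
      (* (4) l = (size ps).+1 >= 1 pairs whose betas compose to a closed path *)
      (exists (p0 : kmor G * kmor G) (ps : seq (kmor G * kmor G)),
         [/\ p0 \in F, all (fun p => p \in F) ps,
             composable_seq p0.2 (map snd ps) &
             kr (kcomp_seq p0.2 (map snd ps)) = ks (kcomp_seq p0.2 (map snd ps))])].
Proof.
have range_eq := center_nf_r Hns HKP HFuniq HFdeg HFsrc HFcoef Hcent Ha.
have source := center_nf_source Hns HKP HFuniq HFdeg HFsrc HFcoef Hcent Ha.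
split.
- exact: range_eq.
- exact: (center_nf_hereditary Hns HKP HFuniq HFdeg HFsrc HFcoef Hcent Ha).
- move=> q qF; have [p pF pq] := source q qF.
  by exists p; rewrite ?range_eq ?pq ?HFsrc.
- apply: closed_path_of_successors; first by apply: contraNneq Ha0 => F0; rewrite Ha F0 big_nil.
  by move=> q /source.
Qed.
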